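(* Let $M,N\ge1$ be integers, let $L$ be a common divisor of $M$ and $N$, and let $T=\mathrm{lcm}(M,N)$. The group $H_{M,N,L}$ has exponent $T$ if $T$ is odd or $T/L$ is even, and exponent $2T$ otherwise. In particular $H_{N,N,N}$, for $N$ odd, and $H_{N,N,N/2}$, for $N$ even, have exponent $N$.
   Context: The Heisenberg group over $\mathbb{Z}$ is the group of $3\times3$ unipotent upper triangular integer matrices; it is generated by $x=\begin{pmatrix}1&1&0\\0&1&0\\0&0&1\end{pmatrix}$, $y=\begin{pmatrix}1&0&0\\0&1&1\\0&0&1\end{pmatrix}$, with $z=xyx^{-1}y^{-1}=\begin{pmatrix}1&0&1\\0&1&0\\0&0&1\end{pmatrix}$ central. For $M,N\ge1$ and $L$ a common divisor of $M$ and $N$, $H_{M,N,L}$ is the group generated by $x,y$ subject to the relations $xz=zx$, $yz=zy$, $z=xyx^{-1}y^{-1}$, $x^N=y^M=z^L=1$; it has order $MNL$. *)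

From mathcomp Require Import all_boot all_fingroup all_solvable.
Set Implicit Arguments. Unset Strict Implicit. Unset Printing Implicit Defensive.
Local Open Scope group_scope.

(* G is (isomorphic to) H_{M,N,L} = < x, y | xz = zx, yz = zy, x^N = y^M = z^L = 1 >
   with z = x y x^-1 y^-1 = [~ x^-1, y^-1] (MathComp: [~ a, b] = a^-1 b^-1 a b). *)
Definition is_HMNL (gT : finGroupType) (G : {group gT}) (M N L : nat) : Prop :=
  G \isog Grp (x : y : (x * [~ x^-1, y^-1] = [~ x^-1, y^-1] * x,
                        y * [~ x^-1, y^-1] = [~ x^-1, y^-1] * y,
                        x ^+ N = 1, y ^+ M = 1, [~ x^-1, y^-1] ^+ L = 1)).

From HB Require Import structures.
From mathcomp Require Import all_boot all_fingroup all_solvable.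
From mathcomp Require Import zify.
Set Implicit Arguments. Unset Strict Implicit. Unset Printing Implicit Defensive.

(* In a group generated by x and y whose commutator z is central, every
   commutator is a power of z and (gh)^E = g^E h^E [h, g]^C(E, 2), so the
   elements g with g^E = 1 form a subgroup: the exponent divides E as soon as
   N | E, M | E and L | C(E, 2).  Conversely Z/N x Z/M x Z/L with the product
   (a, b, c)(a', b', c') = (a + a', b + b', c + c' + a b') is a quotient of
   H_{M,N,L} in which (yx)^E = (E, E, C(E, 2)), so the three conditions are
   also necessary.  As 2 C(T, 2) = T (T - 1), for L | T the condition
   L | C(T, 2) holds iff T is odd or T/L is even, and it always holds for 2T. *)

Lemma mul2_bin2 n : 2 * 'C(n, 2) = n * n.-1.
Proof. by rewrite -mul_bin_diag bin1. Qed.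

Lemma dvdn_bin2 L T :
  L %| T -> (L %| 'C(T, 2)) = odd T || ~~ odd (T %/ L).
Proof.
have [-> | L_gt0 /divnK defT] := posnP L; first by rewrite dvd0n => /eqP->.
case: T defT => [|t defT]; first by rewrite div0n /= dvdn0.
rewrite -(dvdn_pmul2l (isT : 0 < 2)) mul2_bin2 -{1}defT mulnAC dvdn_pmul2r //.
by rewrite dvdn2 oddM /= negb_and orbC.
Qed.

Lemma eq_double_dvdn T e : T %| e -> e %| 2 * T -> ~~ (e %| T) -> e = 2 * T.
Proof.
case/dvdnP=> k ->; have [-> | T_gt0] := posnP T; first by rewrite !muln0.
rewrite dvdn_pmul2r // -{2}[T]mul1n dvdn_pmul2r // => k2.
by have := dvdn_leq (isT : 0 < 2) k2; case: k k2 => [|[|[|k]]].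
Qed.

Section CentralCommutator.
Local Open Scope group_scope.

Variables (gT : finGroupType) (a b : gT).
Local Notation G := (<[a]> <*> <[b]>).
Local Notation c := [~ a, b].
Hypothesis cGc : c \in 'C(G).

Lemma mem_commg_cycle g h : g \in G -> h \in G -> [~ g, h] \in <[c]>.
Proof. by move=> Gg Gh; rewrite -der1_joing_cycles // mem_commg. Qed.

Lemma exponent_joing_cycles_dvdn E :
  #[a] %| E -> #[b] %| E -> #[c] %| 'C(E, 2) -> exponent G %| E.
Proof.
move=> aE bE; rewrite order_dvdn => cE; pose S := [set g in G | g ^+ E == 1].
have S_group : group_set S.
  apply/group_setP; split=> [|g h]; first by rewrite inE group1 expg1n eqxx.
  rewrite !inE => /andP[Gg /eqP gE] /andP[Gh /eqP hE]; rewrite groupM //=.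
  have /centP cGhg : [~ h, g] \in 'C(G).
    by apply: subsetP (mem_commg_cycle Gh Gg); rewrite cycle_subG.
  have commute_hg k : k \in G -> commute k [~ h, g].
    by move=> Gk; apply/commute_sym/cGhg.
  rewrite expMg_Rmul ?gE ?hE ?mul1g; try exact: commute_hg.
  have /cycleP[i ->] := mem_commg_cycle Gh Gg.
  by rewrite expgAC (eqP cE) expg1n.
have sGS : G \subset Group S_group.
  by rewrite join_subG !cycle_subG !inE -!cycle_subG joing_subl joing_subr
             -!order_dvdn aE bE.
by apply/exponentP=> g /(subsetP sGS); rewrite inE => /andP[_ /eqP].
Qed.

End CentralCommutator.

Section HeisenbergModel.

Variables n m l : nat.

(* Reducing the centre modulo gcd(n+1, m+1, l+1) rather than l+1 makes the
   product well defined for all n, m, l; it is l+1 when l+1 | n+1, m+1. *)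
Definition heis_cmod := gcdn (gcdn n.+1 m.+1) l.+1.

Lemma heis_cmod_gt0 : 0 < heis_cmod. Proof. by rewrite gcdn_gt0 orbT. Qed.

Lemma heis_cmod_dvdl : heis_cmod %| n.+1.
Proof. exact: dvdn_trans (dvdn_gcdl _ _) (dvdn_gcdl _ _). Qed.

Lemma heis_cmod_dvdr : heis_cmod %| m.+1.
Proof. exact: dvdn_trans (dvdn_gcdl _ _) (dvdn_gcdr _ _). Qed.

Definition heis := ('I_n.+1 * 'I_m.+1 * 'I_heis_cmod)%type.
HB.instance Definition _ := Finite.on heis.

Definition heis_of (u : nat * nat * nat) : heis :=
  let: (a, b, c) := u in
  (Ordinal (ltn_pmod a (ltn0Sn n)), Ordinal (ltn_pmod b (ltn0Sn m)),
   Ordinal (ltn_pmod c heis_cmod_gt0)).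
Arguments heis_of : simpl never.

Definition heis_coords (p : heis) : nat * nat * nat :=
  let: (a, b, c) := p in (val a, val b, val c).

Definition mul_coords (u v : nat * nat * nat) : nat * nat * nat :=
  let: (a, b, c) := u in let: (a', b', c') := v in
  (a + a', b + b', c + c' + a * b').

Lemma heis_ofP a b c a' b' c' :
  heis_of (a, b, c) = heis_of (a', b', c') <->
  [/\ a = a' %[mod n.+1], b = b' %[mod m.+1] & c = c' %[mod heis_cmod]].
Proof.
split=> [[-> -> ->] // | [ea eb ec]].
by congr (_, _, _); apply: val_inj.
Qed.

Lemma heis_coordsK : cancel heis_coords heis_of.
Proof.
by case=> [[a b] c]; congr (_, _, _); apply: val_inj; rewrite /= modn_small.
Qed.

Lemma heis_of_coords u : heis_of (heis_coords (heis_of u)) = heis_of u.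
Proof. by case: u => [[a b] c]; apply/heis_ofP; rewrite /= !modn_mod. Qed.

Lemma mul_coords_congr u u' v v' :
  heis_of u = heis_of u' -> heis_of v = heis_of v' ->
  heis_of (mul_coords u v) = heis_of (mul_coords u' v').
Proof.
case: u u' v v' => [[a b] c] [[a' b'] c'] [[d e] f] [[d' e'] f'].
move=> /heis_ofP[ea eb ec] /heis_ofP[ed ee ef]; apply/heis_ofP.
have ea_c : a = a' %[mod heis_cmod].
  by rewrite -(modn_dvdm _ heis_cmod_dvdl) ea (modn_dvdm _ heis_cmod_dvdl).
have ee_c : e = e' %[mod heis_cmod].
  by rewrite -(modn_dvdm _ heis_cmod_dvdr) ee (modn_dvdm _ heis_cmod_dvdr).
split.
- by rewrite -modnDm ea ed modnDm.
- by rewrite -modnDm eb ee modnDm.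
rewrite -modnDm -[in RHS]modnDm -(modnDm c) -[in RHS](modnDm c').
by rewrite -modnMm -[in RHS]modnMm ec ef ea_c ee_c.
Qed.

Definition heis_mul (p q : heis) : heis :=
  heis_of (mul_coords (heis_coords p) (heis_coords q)).
Definition heis_one : heis := heis_of (0, 0, 0).
(* Representatives of (-a, -b, ab - c), avoiding truncated subtraction. *)
Definition inv_coords (u : nat * nat * nat) : nat * nat * nat :=
  let: (a, b, c) := u in (n.+1 - a, m.+1 - b, heis_cmod - c + a * b).
Definition heis_inv (p : heis) : heis := heis_of (inv_coords (heis_coords p)).

Lemma heis_mul_of u v :
  heis_mul (heis_of u) (heis_of v) = heis_of (mul_coords u v).
Proof. by apply: mul_coords_congr; apply: heis_of_coords. Qed.

Lemma heis_mulA : associative heis_mul.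
Proof.
move=> p q r; rewrite -(heis_coordsK p) -(heis_coordsK q) -(heis_coordsK r).
rewrite !heis_mul_of; congr heis_of.
case: (heis_coords p) (heis_coords q) (heis_coords r)
  => [[a b] c] [[d e] f] [[g h] i] /=.
by congr (_, _, _); rewrite ?addnA // mulnDl mulnDr; lia.
Qed.

Lemma heis_mul1 : left_id heis_one heis_mul.
Proof.
move=> p; rewrite -(heis_coordsK p) heis_mul_of; congr heis_of.
by case: (heis_coords p) => [[a b] c]; rewrite /= !add0n addn0.
Qed.

Lemma heis_mulV : left_inverse heis_one heis_inv heis_mul.
Proof.
move=> p; rewrite -[X in heis_mul _ X]heis_coordsK heis_mul_of.
case: p => [[a b] c] /=; apply/heis_ofP; split.
- by rewrite subnK ?modnn ?mod0n // ltnW.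
- by rewrite subnK ?modnn ?mod0n // ltnW.
have a_le : a <= n.+1 := ltnW (ltn_ord a).
have c_lt : c < heis_cmod := ltn_ord c.
have -> : heis_cmod - c + a * b + c + (n.+1 - a) * b = heis_cmod + n.+1 * b.
  by rewrite mulnBl; have := leq_mul a_le (leqnn b); lia.
rewrite mod0n; apply/eqP; rewrite -/(dvdn _ _).
by rewrite dvdn_add // dvdn_mulr // heis_cmod_dvdl.
Qed.

HB.instance Definition _ := Finite_isGroup.Build heis heis_mulA heis_mul1 heis_mulV.

End HeisenbergModel.

Section HeisenbergModelGroup.
Local Open Scope group_scope.

Variables n m l : nat.
Local Notation heis_of := (@heis_of n m l).
Local Notation cmod := (heis_cmod n m l).

Lemma heis_oneE : 1 = heis_of (0, 0, 0). Proof. by []. Qed.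

Lemma heis_mulE u v : heis_of u * heis_of v = heis_of (mul_coords u v).
Proof. exact: heis_mul_of. Qed.

Lemma heis_of_eq1 a b c :
  (heis_of (a, b, c) == 1) = [&& n.+1 %| a, m.+1 %| b & cmod %| c].
Proof.
rewrite heis_oneE; apply/eqP/and3P => [/heis_ofP[ea eb ec] | [ea eb ec]].
  by rewrite /dvdn ea eb ec !mod0n.
by apply/heis_ofP; split; apply/eqP; rewrite mod0n.
Qed.

Lemma expg_heis_of a b c k :
  heis_of (a, b, c) ^+ k = heis_of (k * a, k * b, k * c + 'C(k, 2) * (a * b))%N.
Proof.
elim: k => [|k IHk]; first by rewrite !mul0n.
rewrite expgS IHk heis_mulE /=; congr (heis_of (_, _, _)).
all: by rewrite ?binS ?bin1; nia.
Qed.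

Lemma heis_central c p : commute p (heis_of (0, 0, c)).
Proof.
rewrite /commute -(heis_coordsK p) !heis_mulE.
case: (heis_coords p) => [[a b] c'] /=.
by rewrite !muln0 !addn0 !add0n addnC.
Qed.

Definition heis_x := heis_of (1, 0, 0)%N.
Definition heis_y := heis_of (0, 1, 0)%N.

Lemma heis_commg_xy : [~ heis_x^-1, heis_y^-1] = heis_of (0, 0, 1)%N.
Proof.
have xy : heis_x * heis_y = heis_of (0, 0, 1)%N * (heis_y * heis_x).
  by rewrite /heis_x /heis_y !heis_mulE.
by rewrite /commg /conjg !invgK !mulgA xy mulgA !mulgK.
Qed.

Lemma heis_relations :
  let c := [~ heis_x^-1, heis_y^-1] in
  [/\ commute heis_x c, commute heis_y c,
      heis_x ^+ n.+1 = 1, heis_y ^+ m.+1 = 1 & c ^+ cmod = 1].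
Proof.
rewrite /= heis_commg_xy !expg_heis_of; split; try exact: heis_central.
all: by apply/eqP; rewrite heis_of_eq1 !muln0 ?muln1 ?addn0 dvdnn !dvdn0.
Qed.

Lemma heis_exponent_dvdn E : exponent (<[heis_x]> <*> <[heis_y]>) %| E ->
  [&& n.+1 %| E, m.+1 %| E & cmod %| 'C(E, 2)].
Proof.
have yx : heis_y * heis_x = heis_of (1, 1, 0)%N.
  by rewrite /heis_x /heis_y heis_mulE.
have Gx : heis_x \in <[heis_x]> <*> <[heis_y]>.
  by rewrite -cycle_subG joing_subl.
have Gy : heis_y \in <[heis_x]> <*> <[heis_y]>.
  by rewrite -cycle_subG joing_subr.
move/exponentP/(_ _ (groupM Gy Gx))/eqP.
by rewrite yx expg_heis_of heis_of_eq1 !muln1 muln0 add0n.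
Qed.

End HeisenbergModelGroup.

Section HMNLExponent.
Local Open Scope group_scope.

Lemma exponent_homg (rT gT : finGroupType) (H : {group rT}) (G : {group gT}) :
  H \homg G -> exponent H %| exponent G.
Proof. by case/homgP=> f <-; apply: exponent_morphim. Qed.

Lemma HMNL_homg (rT gT : finGroupType) (G : {group gT}) M N L (a b : rT) :
  is_HMNL G M N L ->
  let c := [~ a^-1, b^-1] in
  [/\ commute a c, commute b c, a ^+ N = 1, b ^+ M = 1 & c ^+ L = 1] ->
  (<[a]> <*> <[b]>)%G \homg G.
Proof.
move=> isoG /= [cac cbc aN bM cL]; rewrite isoG; apply/existsP; exists (a, b).
by rewrite /= !xpair_eqE /= cac cbc aN bM cL !eqxx.
Qed.

Lemma exponent_HMNL_dvdn M N L (gT : finGroupType) (G : {group gT}) E :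
  is_HMNL G M N L -> N %| E -> M %| E -> L %| 'C(E, 2) -> exponent G %| E.
Proof.
move=> /isoGrp_hom/existsP[[x y]] /=; rewrite !xpair_eqE /=.
case/andP=> /eqP <- /and5P[/eqP cxz /eqP cyz /eqP xN /eqP yM /eqP zL] NE ME LE.
rewrite -(cycleV x) -(cycleV y); apply: exponent_joing_cycles_dvdn.
- rewrite !cycleV -sub_cent1 join_subG !cycle_subG.
  by apply/andP; split; apply/cent1P.
- by rewrite orderV (dvdn_trans _ NE) // order_dvdn xN.
- by rewrite orderV (dvdn_trans _ ME) // order_dvdn yM.
- by rewrite (dvdn_trans _ LE) // order_dvdn zL.
Qed.

Lemma exponent_HMNL_dvdnE M N L (gT : finGroupType) (G : {group gT}) E :
  0 < M -> 0 < N -> L %| M -> L %| N -> is_HMNL G M N L ->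
  (exponent G %| E) = [&& N %| E, M %| E & L %| 'C(E, 2)].
Proof.
move=> M_gt0 N_gt0 LM LN isoG.
apply/idP/and3P=> [expGE | [NE ME LE]]; last first.
  exact: exponent_HMNL_dvdn isoG NE ME LE.
have L_gt0 : 0 < L := dvdn_gt0 M_gt0 LM.
have cmodL : heis_cmod N.-1 M.-1 L.-1 = L.
  by rewrite /heis_cmod !prednK //; apply/gcdn_idPr; rewrite dvdn_gcd LN LM.
pose H := (<[heis_x N.-1 M.-1 L.-1]> <*> <[heis_y N.-1 M.-1 L.-1]>)%G.
have homHG : H \homg G.
  apply: HMNL_homg isoG _.
  by have := heis_relations N.-1 M.-1 L.-1; rewrite !prednK // cmodL.
have := heis_exponent_dvdn (dvdn_trans (exponent_homg homHG) expGE).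
by rewrite !prednK // cmodL => /and3P.
Qed.

End HMNLExponent.

Lemma exponent_HMNL M N L (gT : finGroupType) (G : {group gT}) :
  0 < M -> 0 < N -> L %| M -> L %| N -> is_HMNL G M N L ->
  exponent G = (let T := lcmn M N in
                if odd T || ~~ odd (T %/ L) then T else 2 * T).
Proof.
move=> M_gt0 N_gt0 LM LN isoG /=; set T := lcmn M N.
have dvdGP E := exponent_HMNL_dvdnE E M_gt0 N_gt0 LM LN isoG.
have LT : L %| T := dvdn_trans LM (dvdn_lcml M N).
have T_dvdG : T %| exponent G.
  by move: (dvdnn (exponent G)); rewrite dvdGP dvdn_lcm => /and3P[-> ->].
have G_dvdT : (exponent G %| T) = odd T || ~~ odd (T %/ L).
  by rewrite dvdGP dvdn_lcml dvdn_lcmr dvdn_bin2.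
have G_dvd2T : exponent G %| 2 * T.
  rewrite dvdGP !dvdn_mull ?dvdn_lcml ?dvdn_lcmr // dvdn_bin2 ?dvdn_mull //.
  by rewrite -muln_divA // !oddM.
case: ifP => cond; first by apply/eqP; rewrite eqn_dvd G_dvdT cond T_dvdG.
by apply: eq_double_dvdn; rewrite ?G_dvdT ?cond.
Qed.

Theorem proposition4 :
  (forall (M N L : nat) (gT : finGroupType) (G : {group gT}),
      0 < M -> 0 < N -> L %| M -> L %| N -> is_HMNL G M N L ->
      exponent G = (let T := lcmn M N in
                    if odd T || ~~ odd (T %/ L) then T else 2 * T)) /\
  (forall (N : nat) (gT : finGroupType) (G : {group gT}),
      0 < N -> odd N -> is_HMNL G N N N -> exponent G = N) /\
  (forall (N : nat) (gT : finGroupType) (G : {group gT}),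
      0 < N -> ~~ odd N -> is_HMNL G N N N./2 -> exponent G = N).
Proof.
split; first exact: exponent_HMNL.
split=> [N gT G N_gt0 oddN isoG | N gT G N_gt0 evenN isoG].
  rewrite (exponent_HMNL N_gt0 N_gt0 (dvdnn N) (dvdnn N) isoG) /=.
  by rewrite (lcmn_idPr (dvdnn N)) oddN.
have defN : N = 2 * N./2 by rewrite mul2n even_halfK.
have halfN : N./2 %| N by rewrite {2}defN dvdn_mull.
rewrite (exponent_HMNL N_gt0 N_gt0 halfN halfN isoG) /= (lcmn_idPr (dvdnn N)).
by rewrite {2}defN mulnK ?orbT // -(ltn_pmul2l (isT : 0 < 2)) -defN.
Qed.
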